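(* In the following instance, $\mathrm{OPT}=\Omega(n\ln n/\ln\ln n)$; that is, there exist constants $\kappa>0$ and $n_0$ such that $\mathrm{OPT}\ge\kappa\, n\ln n/\ln\ln n$ for all $n\ge n_0$. Instance: $n$ unit-demand bidders and $m=n^2$ items; for each bidder $i$ and item $\ell$, the signal $s_{i\ell}$ equals $1$ with probability $1/n$ and $0$ with probability $1-1/n$, all signals mutually independent; bidder $i$'s value for item $\ell$ is $v_{i\ell}(\mathbf s)=1+\sum_{j=1}^n s_{j\ell}$.
   Context: Unit-demand: bidder $i$'s value for a set $T$ of items is $\max_{\ell\in T}v_{i\ell}(\mathbf s)$ (and $0$ for $T=\emptyset$). $\mathrm{OPT}=\mathbb E_{\mathbf s}[\mathrm{OPT}(\mathbf s)]$, where $\mathrm{OPT}(\mathbf s)$ is the maximum total value $\sum_{(i,\ell)\in\mu}v_{i\ell}(\mathbf s)$ over matchings $\mu$ of bidders to items (each bidder gets at most one item and each item goes to at most one bidder). *)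

From HB Require Import structures.
From mathcomp Require Import all_boot all_order all_algebra.
From mathcomp Require Import reals exp.
Set Implicit Arguments. Unset Strict Implicit. Unset Printing Implicit Defensive.
Import Order.TTheory GRing.Theory Num.Theory.
Local Open Scope ring_scope.

Definition signal (n : nat) := {ffun 'I_n * 'I_(n ^ 2) -> bool}.

Definition sprob (R : realType) (n : nat) (s : signal n) : R :=
  \prod_(p : 'I_n * 'I_(n ^ 2)) (if s p then n%:R^-1 else 1 - n%:R^-1).

Definition val (R : realType) (n : nat) (s : signal n)
    (i : 'I_n) (l : 'I_(n ^ 2)) : R :=
  1 + \sum_(j < n) (s (j, l) : nat)%:R.

Definition is_matching (n : nat) (mu : {ffun 'I_n -> option 'I_(n ^ 2)}) : bool :=
  [forall i, forall j, (i != j) ==> (mu i == None) || (mu i != mu j)].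

Definition match_value (R : realType) (n : nat) (s : signal n)
    (mu : {ffun 'I_n -> option 'I_(n ^ 2)}) : R :=
  \sum_(i < n) (if mu i is Some l then val R s i l else 0).

(* OPT(s): maximum total value over matchings (values are >= 0 and the empty
   matching has value 0, so 0 is a harmless neutral element). *)
Definition OPT_s (R : realType) (n : nat) (s : signal n) : R :=
  \big[Num.max/0]_(mu : {ffun 'I_n -> option 'I_(n ^ 2)} | is_matching mu)
     match_value R s mu.

Definition OPT (R : realType) (n : nat) : R :=
  \sum_(s : signal n) sprob R s * OPT_s R s.

From Pilot Require Import Defs.
From HB Require Import structures.
From mathcomp Require Import all_boot all_order all_algebra.
From mathcomp Require Import reals exp sequences.
From mathcomp Require Import lra zify ring.
Import Order.TTheory GRing.Theory Num.Theory.
Local Open Scope ring_scope.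
Set Implicit Arguments. Unset Strict Implicit. Unset Printing Implicit Defensive.

(* Call an item k-heavy when exactly k bidders receive signal 1 for it: it is
   then worth k + 1 to every bidder, so OPT(s) >= (k + 1) min(n, N_k(s)), where
   N_k counts the k-heavy items.  Distinct items have independent columns of
   signals, so N_k is binomial with n^2 trials and success probability
   p = C(n,k) n^-k (1 - 1/n)^(n-k), and a second-moment bound gives
   E[min(n, N_k)] >= n/2 as soon as p >= 1/n.  Choosing k maximal with
   e k^k <= n gives p >= 1/(e k^k) >= 1/n, while n < e (k+1)^(k+1) forces
   k + 1 >= ln n / (2 ln ln n). *)

Section Expectation.
Variables (R : comPzRingType) (Omega : finType) (P : Omega -> R).

Definition expect (F : Omega -> R) : R := \sum_w P w * F w.

Lemma eq_expect (F G : Omega -> R) : F =1 G -> expect F = expect G.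
Proof. by move=> FG; apply: eq_bigr => w _; rewrite FG. Qed.

Lemma expect1 : expect (fun=> 1) = \sum_w P w.
Proof. by apply: eq_bigr => w _; rewrite mulr1. Qed.

Lemma expectD (F G : Omega -> R) :
  expect (fun w => F w + G w) = expect F + expect G.
Proof. by rewrite -big_split; apply: eq_bigr => w _; rewrite mulrDr. Qed.

Lemma expectZ (a : R) (F : Omega -> R) :
  expect (fun w => a * F w) = a * expect F.
Proof. by rewrite big_distrr; apply: eq_bigr => w _; rewrite mulrCA. Qed.

Lemma expect_sum (I : finType) (Q : pred I) (F : I -> Omega -> R) :
  expect (fun w => \sum_(i | Q i) F i w) = \sum_(i | Q i) expect (F i).
Proof.
rewrite /expect (eq_bigr _ (fun w _ => big_distrr _ _ _)) /=.
exact: exchange_big.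
Qed.

End Expectation.

Arguments eq_expect {R Omega P} F G.

Section ProductMeasure.
Variables (R : comPzRingType) (I T : finType) (mu : T -> R).

Definition prodw (s : {ffun I -> T}) : R := \prod_i mu (s i).

Lemma expect_prodw (g : I -> T -> R) :
  expect prodw (fun s => \prod_i g i (s i)) = \prod_i expect mu (g i).
Proof.
rewrite /expect bigA_distr_bigA /=; apply: eq_bigr => s _.
by rewrite -big_split.
Qed.

Hypothesis mu_sum1 : \sum_t mu t = 1.

Lemma expect_prodw_coord i (g : T -> R) :
  expect prodw (fun s => g (s i)) = expect mu g.
Proof.
pose h j t := if j == i then g t else 1.
rewrite (eq_expect _ (fun s : {ffun I -> T} => \prod_j h j (s j))); last first.
  by move=> s; rewrite (bigD1 i) //= /h eqxx big1 ?mulr1 // => j /negbTE ->.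
rewrite expect_prodw (bigD1 i) //= /h eqxx big1 ?mulr1 // => j /negbTE ->.
by rewrite expect1 mu_sum1.
Qed.

Lemma expect_prodw_coord2 i i' (g g' : T -> R) : i != i' ->
  expect prodw (fun s => g (s i) * g' (s i')) = expect mu g * expect mu g'.
Proof.
move=> neq_ii'.
pose h j t := if j == i then g t else if j == i' then g' t else 1.
have hi : h i = g by rewrite /h eqxx.
have hi' : h i' = g' by rewrite /h eq_sym (negbTE neq_ii') eqxx.
have h1 j : j != i -> j != i' -> h j = fun=> 1 by rewrite /h => /negbTE -> /negbTE ->.
rewrite (eq_expect _ (fun s : {ffun I -> T} => \prod_j h j (s j))); last first.
  move=> s; rewrite (bigD1 i) // (bigD1 i') 1?eq_sym //= hi hi' mulrA.
  by rewrite big1 ?mulr1 // => j /andP[ji ji']; rewrite h1.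
rewrite expect_prodw (bigD1 i) // (bigD1 i') 1?eq_sym //= hi hi' mulrA.
by rewrite big1 ?mulr1 // => j /andP[ji ji']; rewrite h1 // expect1.
Qed.

End ProductMeasure.

Section Occupancy.
Variables (R : comPzRingType) (I T : finType) (mu : T -> R) (S : {pred T}).
Hypothesis mu_sum1 : \sum_t mu t = 1.

Definition hits (s : {ffun I -> T}) : nat := #|[set i | s i \in S]|.

Lemma hitsE s : (hits s)%:R = \sum_i ((s i \in S)%:R : R).
Proof.
rewrite /hits -sum1_card natr_sum big_mkcond.
by apply: eq_bigr => i _; rewrite inE; case: (_ \in S).
Qed.

Let q := expect mu (fun t => (t \in S)%:R).

Let X i (s : {ffun I -> T}) : R := (s i \in S)%:R.

Lemma expect_X i : expect (prodw mu) (X i) = q.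
Proof. exact: (expect_prodw_coord mu_sum1 i (fun t => (t \in S)%:R)). Qed.

Lemma expect_XX i j : i != j -> expect (prodw mu) (fun s => X i s * X j s) = q ^+ 2.
Proof.
move=> neq_ij; pose x t : R := (t \in S)%:R.
by rewrite (expect_prodw_coord2 mu_sum1 x x neq_ij).
Qed.

Lemma expect_hits : expect (prodw mu) (fun s => (hits s)%:R) = #|I|%:R * q.
Proof.
rewrite (eq_expect _ _ hitsE) expect_sum.
under eq_bigr do rewrite expect_X.
by rewrite sumr_const mulr_natl.
Qed.

Lemma expect_hits_sqr :
  expect (prodw mu) (fun s => (hits s)%:R ^+ 2) =
    #|I|%:R * q + (#|I| * #|I|.-1)%:R * q ^+ 2.
Proof.
rewrite (eq_expect _ (fun s => \sum_i \sum_j X i s * X j s)); last first.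
  by move=> s; rewrite hitsE expr2 big_distrlr.
rewrite expect_sum.
under eq_bigr => i _.
  rewrite expect_sum (bigD1 i) //=.
  rewrite (eq_expect _ (X i)); last first.
    by move=> s; rewrite /X; case: (_ \in S); rewrite ?mulr1 ?mulr0.
  rewrite expect_X.
  under eq_bigr => j ji do rewrite expect_XX 1?eq_sym //.
  rewrite sumr_const cardC1.
  over.
by rewrite big_split /= !sumr_const -mulrnA !mulr_natl mulnC.
Qed.

End Occupancy.

Lemma expect_hits_sqr_le (R : realDomainType) (I T : finType) (mu : T -> R) (S : {pred T}) :
  \sum_t mu t = 1 ->
  expect (prodw mu) (fun s : {ffun I -> T} => (hits S s)%:R ^+ 2) <=
    expect (prodw mu) (fun s : {ffun I -> T} => (hits S s)%:R) +
    expect (prodw mu) (fun s : {ffun I -> T} => (hits S s)%:R) ^+ 2.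
Proof.
move=> mu_sum1; rewrite expect_hits_sqr // expect_hits // lerD2l exprMn -natrX.
by apply: ler_wpM2r; rewrite ?sqr_ge0 // ler_nat -mulnn leq_mul ?leq_pred.
Qed.

Section RandomSubset.
Variables (R : comPzRingType) (J : finType) (pi : R).

Definition bern (b : bool) : R := if b then pi else 1 - pi.

Definition subsetw (A : {set J}) : R := \prod_j bern (j \in A).

Lemma sum_subsetw : \sum_A subsetw A = 1.
Proof.
have <- : \prod_(j : J) (pi + (1 - pi)) = 1 by rewrite big1 // => j _; rewrite addrC subrK.
by rewrite bigA_distr.
Qed.

Lemma subsetwE A : subsetw A = pi ^+ #|A| * (1 - pi) ^+ (#|J| - #|A|).
Proof.
rewrite /subsetw (bigID (mem A)) /=.
rewrite (eq_bigr (fun=> pi)) => [|j ->] //; rewrite prodr_const.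
rewrite (eq_bigr (fun=> 1 - pi)) => [|j /negbTE ->] //; rewrite prodr_const.
by rewrite -(cardC (mem A)) addKn.
Qed.

Lemma expect_card_eq k :
  expect subsetw (fun A => (#|A| == k)%:R) =
    'C(#|J|, k)%:R * pi ^+ k * (1 - pi) ^+ (#|J| - k).
Proof.
rewrite /expect (bigID (fun A : {set J} => #|A| == k)) /= [X in _ + X]big1; last first.
  by move=> A /negbTE ->; rewrite mulr0.
rewrite addr0 (eq_bigr (fun=> pi ^+ k * (1 - pi) ^+ (#|J| - k))); last first.
  by move=> A /eqP <-; rewrite eqxx mulr1 subsetwE.
rewrite sumr_const -card_draws -mulrA mulr_natl; congr (_ *+ _).
by apply: eq_card => A; rewrite inE.
Qed.

End RandomSubset.

Section Columns.
Variables (J L : finType).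

Definition cols (s : {ffun J * L -> bool}) : {ffun L -> {set J}} :=
  [ffun l => [set j | s (j, l)]].

Definition uncols (c : {ffun L -> {set J}}) : {ffun J * L -> bool} :=
  [ffun p => p.1 \in c p.2].

Lemma colsK : cancel cols uncols.
Proof. by move=> s; apply/ffunP => -[j l]; rewrite !ffunE inE. Qed.

Lemma uncolsK : cancel uncols cols.
Proof. by move=> c; apply/ffunP => l; apply/setP => j; rewrite !ffunE inE ffunE. Qed.

Variables (R : comPzRingType) (pi : R).

Lemma prodw_bern_uncols c : prodw (bern pi) (uncols c) = prodw (subsetw pi) c.
Proof.
rewrite /prodw (eq_bigr (fun p => bern pi (p.1 \in c p.2))) => [|p _]; last first.
  by rewrite ffunE.
by rewrite -(pair_bigA _ (fun j l => bern pi (j \in c l))) exchange_big.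
Qed.

Lemma expect_cols (F : {ffun L -> {set J}} -> R) :
  expect (prodw (bern pi)) (fun s => F (cols s)) = expect (prodw (subsetw pi)) F.
Proof.
rewrite /expect (reindex uncols); last exact: onW_bij (Bijective uncolsK colsK).
by apply: eq_bigr => c _; rewrite prodw_bern_uncols /= uncolsK.
Qed.

End Columns.

Lemma bern_ge0 (R : numDomainType) (pi : R) b : 0 <= pi <= 1 -> 0 <= bern pi b.
Proof. by case/andP => ? ?; case: b; rewrite /bern // subr_ge0. Qed.

Lemma prodw_ge0 (R : numDomainType) (I T : finType) (mu : T -> R) s :
  (forall t, 0 <= mu t) -> 0 <= @prodw R I T mu s.
Proof. by move=> mu_ge0; apply: prodr_ge0. Qed.

Lemma quadratic_le_min (R : realFieldType) (a t x : R) :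
  0 < a -> t <= 1 -> 0 <= x -> t * x - (t * x) ^+ 2 / (4 * a) <= Num.min a x.
Proof.
move=> a_gt0 t_le1 x_ge0; rewrite le_min; apply/andP; split.
  have -> : t * x - (t * x) ^+ 2 / (4 * a) = a - (t * x - 2 * a) ^+ 2 / (4 * a).
    by field; rewrite lt0r_neq0.
  by rewrite gerBl divr_ge0 ?sqr_ge0 // mulr_ge0 // ltW.
have : 0 <= (t * x) ^+ 2 / (4 * a) by rewrite divr_ge0 ?sqr_ge0 // mulr_ge0 // ltW.
have : t * x <= x by rewrite -[leRHS]mul1r ler_wpM2r.
lra.
Qed.

Section SecondMoment.
Variables (R : realFieldType) (Omega : finType) (P : Omega -> R).
Hypothesis P_ge0 : forall w, 0 <= P w.

Lemma ler_expect (F G : Omega -> R) :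
  (forall w, F w <= G w) -> expect P F <= expect P G.
Proof. by move=> FG; apply: ler_sum => w _; rewrite ler_wpM2l. Qed.

Lemma expect_min_ge_half (N : Omega -> R) (a : R) : (forall w, 0 <= N w) ->
  1 <= a -> a <= expect P N ->
  expect P (fun w => N w ^+ 2) <= expect P N + expect P N ^+ 2 ->
  a / 2 <= expect P (fun w => Num.min a (N w)).
Proof.
move=> N_ge0 a_ge1 a_le_EN EN2.
set m := expect P N.
have a_gt0 : 0 < a by lra.
have m_gt0 : 0 < m by apply: lt_le_trans a_le_EN.
set t := a / m; set c := t ^+ 2 / (4 * a).
have t_le1 : t <= 1 by rewrite ler_pdivrMr // mul1r.
apply: le_trans (ler_expect (fun w => quadratic_le_min a_gt0 t_le1 (N_ge0 w))).
have -> : expect P (fun w => t * N w - (t * N w) ^+ 2 / (4 * a)) =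
          t * m + (- c) * expect P (fun w => N w ^+ 2).
  rewrite -!expectZ -expectD; apply: eq_expect => w; rewrite /c exprMn; field.
  by rewrite lt0r_neq0.
have c_ge0 : 0 <= c by rewrite divr_ge0 ?sqr_ge0 // mulr_ge0 // ltW.
apply: le_trans (_ : t * m - c * (m + m ^+ 2) <= _); last first.
  by rewrite mulNr lerD2l lerN2 ler_wpM2l.
have -> : t * m - c * (m + m ^+ 2) = a - a / (4 * m) - a / 4.
  by rewrite /c /t; field; rewrite !lt0r_neq0.
have : a / (4 * m) <= 1 / 4.
  by rewrite ler_pdivrMr ?mulr_gt0 // mul1r mulrA mulVf ?mul1r // pnatr_eq0.
lra.
Qed.

End SecondMoment.

Lemma sum_ord_lt (R : pzSemiRingType) (n m : nat) :
  \sum_(i < n) ((i < m)%N%:R : R) = (minn n m)%:R.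
Proof.
elim: n => [|n' IH]; first by rewrite big_ord0 min0n.
by rewrite big_ord_recr /= IH -natrD; congr (_%:R); case: (ltnP n' m) => /=; lia.
Qed.

Section Matchings.
Variables (R : realType) (n : nat).

Lemma match_value_le_OPT_s (s : signal n) mu :
  is_matching mu -> match_value R s mu <= OPT_s R s.
Proof. by move=> mu_matching; rewrite /OPT_s (bigD1 mu) //= le_max lexx. Qed.

Lemma is_matching_onth (L : seq 'I_(n ^ 2)) :
  uniq L -> is_matching [ffun i : 'I_n => onth L i].
Proof.
move=> uniqL; apply/forallP => i; apply/forallP => j; apply/implyP => neq_ij.
rewrite !ffunE; case Li: (onth L i) => [l|] //=; apply/eqP => Lj.
have index_of (m : 'I_n) : onth L m = Some l -> index l L = m.
  move=> Lm; have m_lt : (m < size L)%N by rewrite -onthTE Lm.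
  by rewrite -(@onth_nth _ l l L m Lm) index_uniq.
by move/eqP: neq_ij; apply; apply: val_inj; rewrite /= -(index_of i) // -(index_of j).
Qed.

Lemma val_cols (s : signal n) i l : Defs.val R s i l = 1 + #|cols s l|%:R.
Proof.
rewrite /Defs.val -sum1_card; congr (1 + _); rewrite natr_sum [RHS]big_mkcond /=.
by apply: eq_bigr => j _; rewrite ffunE inE; case: (s (j, l)).
Qed.

Lemma OPT_s_ge_hits k (s : signal n) :
  (k.+1)%:R * (minn n (hits [pred A : {set 'I_n} | #|A| == k] (cols s)))%:R <= OPT_s R s.
Proof.
set L := enum [set l | cols s l \in [pred A : {set 'I_n} | #|A| == k]].
apply: le_trans (match_value_le_OPT_s s (is_matching_onth (enum_uniq _ : uniq L))).
rewrite /match_value /hits cardE -/L -sum_ord_lt mulr_sumr; apply: ler_sum => i _.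
rewrite ffunE; case Li: (onth L i) => [l|]; last by rewrite -onthTE Li mulr0.
have : l \in L by rewrite -(@onth_nth _ l l L i Li) mem_nth // -onthTE Li.
by rewrite -onthTE Li val_cols mem_enum !inE => /eqP ->; rewrite mulr1 -natr1 addrC.
Qed.

End Matchings.

Lemma OPT_ge_half (R : realType) (n k : nat) : (0 < n)%N ->
  n%:R^-1 <= expect (subsetw (n%:R^-1 : R)) (fun A : {set 'I_n} => (#|A| == k)%:R) ->
  (k.+1)%:R * n%:R / 2 <= OPT R n.
Proof.
move=> n_gt0 q_ge.
set pi : R := n%:R^-1.
set S := [pred A : {set 'I_n} | #|A| == k].
have pi01 : 0 <= pi <= 1 by rewrite invr_ge0 ler0n invf_le1 ?ler1n ?ltr0n.
have subsetw_ge0 (A : {set 'I_n}) : 0 <= subsetw pi A by apply: prodr_ge0 => j _; apply: bern_ge0.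
have n_ge1 : 1 <= n%:R :> R by rewrite ler1n.
pose P := prodw (subsetw pi) : {ffun 'I_(n ^ 2) -> {set 'I_n}} -> R.
pose N (c : {ffun 'I_(n ^ 2) -> {set 'I_n}}) : R := (hits S c)%:R.
have mu_ge : n%:R <= expect P N.
  rewrite /N expect_hits ?sum_subsetw // card_ord natrX.
  apply: le_trans (ler_wpM2l (exprn_ge0 2 (ler0n _ _)) q_ge).
  by rewrite expr2 -mulrA mulfV ?mulr1 // pnatr_eq0 -lt0n.
have half := expect_min_ge_half (fun c => prodw_ge0 c subsetw_ge0)
  (fun c => ler0n R _) n_ge1 mu_ge (expect_hits_sqr_le 'I_(n ^ 2) S (sum_subsetw _ pi)).
rewrite -mulrA; apply: le_trans (ler_wpM2l (ler0n R k.+1) half) _.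
rewrite -expectZ -expect_cols.
have -> : OPT R n = expect (prodw (bern pi)) (@OPT_s R n) by [].
apply: ler_expect => s; first by apply: prodw_ge0 => b; apply: bern_ge0.
by rewrite /N -natr_min minEnat OPT_s_ge_hits.
Qed.

Lemma leq_expn_bin (n k : nat) : (k <= n)%N -> (n ^ k <= 'C(n, k) * k ^ k)%N.
Proof.
move=> le_kn.
have step m : (m <= k)%N -> (n ^ m * k ^_ m <= n ^_ m * k ^ m)%N.
  elim: m => [|m IH] le_mk; first by rewrite !ffactn0 !expn0.
  rewrite !ffactnSr !expnSr mulnACA [leqRHS]mulnACA leq_mul ?IH ?(ltnW le_mk) //.
  nia.
have := step k (leqnn k); rewrite ffactnn -bin_ffact mulnAC.
by rewrite leq_pmul2r // fact_gt0.
Qed.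

Section Analysis.
Variable R : realType.

Lemma expRN1_le_1Bn_expn (n : nat) : (0 < n)%N ->
  expR (-1) <= (1 - n%:R^-1 : R) ^+ n.-1.
Proof.
case: n => [//|[_|m _]]; first by rewrite expr0 expR_le1 lerN10.
have m_gt0 : 0 < m.+1%:R :> R by rewrite ltr0Sn.
have base_gt0 : 0 < 1 + m.+1%:R^-1 :> R by rewrite addr_gt0 ?invr_gt0.
have -> : 1 - m.+2%:R^-1 = (1 + m.+1%:R^-1 : R)^-1.
  by rewrite -natr1; field; rewrite nat1r natr1 !pnatr_eq0.
rewrite /= exprVn expRN lef_pV2 ?posrE ?expR_gt0 ?exprn_gt0 //.
have <- : expR (m.+1%:R^-1) ^+ m.+1 = expR 1 :> R.
  by rewrite -expRM_natl mulfV // lt0r_neq0.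
by rewrite lerXn2r ?nnegrE ?expR_ge0 ?expR_ge1Dx // ltW.
Qed.

Lemma binomial_term_ge (n k : nat) : (0 < k <= n)%N ->
  expR 1 * (k%:R : R) ^+ k <= n%:R ->
  n%:R^-1 <= 'C(n, k)%:R * (n%:R^-1) ^+ k * (1 - n%:R^-1) ^+ (n - k) :> R.
Proof.
case/andP=> k_gt0 le_kn ek_le_n.
have n_gt0 : 0 < n%:R :> R by rewrite ltr0n (leq_trans k_gt0).
have n_ge1 : 1 <= n%:R :> R by rewrite ler1n (leq_trans k_gt0).
have kk_gt0 : 0 < k%:R ^+ k :> R by rewrite exprn_gt0 // ltr0n.
have inv_le1 : n%:R^-1 <= 1 :> R by rewrite invf_le1.
have inv_ge0 : 0 <= n%:R^-1 :> R by rewrite invr_ge0 ler0n.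
have binom : (k%:R ^+ k)^-1 <= 'C(n, k)%:R * (n%:R^-1) ^+ k :> R.
  rewrite exprVn ler_pdivlMr ?exprn_gt0 // mulrC ler_pdivrMr //.
  by rewrite -!natrX -natrM ler_nat leq_expn_bin.
have tail : expR (-1) <= (1 - n%:R^-1 : R) ^+ (n - k).
  apply: le_trans (expRN1_le_1Bn_expn (leq_trans k_gt0 le_kn)) _.
  rewrite ler_wiXn2l //; [lra | lra | lia].
apply: le_trans (ler_pM _ _ binom tail); last exact: expR_ge0.
- by rewrite expRN -invfM lef_pV2 ?posrE ?mulr_gt0 ?expR_gt0 // mulrC.
- by rewrite invr_ge0 ltW.
Qed.

End Analysis.

Section Logarithms.
Variable R : realType.

Lemma le_div_ln (a b : R) : 1 <= ln a -> a <= b -> a / ln a <= b / ln b.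
Proof.
move=> ln_a_ge1 le_ab.
have a_gt1 : 1 < a by rewrite ltNge; apply/negP => /ln_le0; lra.
have [a_gt0 b_gt0] : 0 < a /\ 0 < b by split; lra.
have ln_le : ln a <= ln b by rewrite ler_ln ?posrE.
have ln_ratio : ln b - ln a <= b / a - 1.
  have ba_gt0 : 0 < b / a by rewrite divr_gt0.
  by have := @le_ln1Dx R (b / a - 1); rewrite [1 + _]addrC subrK ln_div ?posrE //; apply; lra.
have cross : a * ln b <= b * ln a.
  have : a * (ln b - ln a) <= a * (b / a - 1) by rewrite ler_wpM2l // ltW.
  rewrite !mulrBr mulr1 mulrCA mulfV ?lt0r_neq0 // mulr1.
  have : (b - a) * 1 <= (b - a) * ln a by rewrite ler_wpM2l // subr_ge0.
  nra.
have [ln_a_gt0 ln_b_gt0] : 0 < ln a /\ 0 < ln b by split; lra.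
by rewrite ler_pdivrMr // mulrAC ler_pdivlMr.
Qed.

Lemma ln_ge_1BV (K : R) : 0 < K -> 1 - K^-1 <= ln K.
Proof.
move=> K_gt0; have inv_gt0 : 0 < K^-1 by rewrite invr_gt0.
have : - ln K <= K^-1 - 1.
  by have := @le_ln1Dx R (K^-1 - 1); rewrite [1 + _]addrC subrK lnV ?posrE //; apply; lra.
lra.
Qed.

Lemma div_ln_le_of_le (a K : R) : 2 <= K -> 1 <= ln a -> a <= 1 + K * ln K ->
  a / ln a <= 2 * K.
Proof.
move=> K_ge2 ln_a_ge1 a_le; apply: le_trans (le_div_ln ln_a_ge1 a_le) _.
have K_gt0 : 0 < K by lra.
have ln_K : 1 - K^-1 <= ln K := ln_ge_1BV K_gt0.
have invK : K^-1 <= 2^-1 by rewrite lef_pV2 ?posrE //; lra.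
have KlnK : K - 1 <= K * ln K.
  by have := ler_wpM2l (ltW K_gt0) ln_K; rewrite mulrBr mulr1 mulfV ?lt0r_neq0.
have b_gt0 : 0 < 1 + K * ln K by lra.
have ln_b : ln K <= ln (1 + K * ln K) by rewrite ler_ln ?posrE //; lra.
have ln_K_gt0 : 0 < ln K by lra.
rewrite ler_pdivrMr; last by lra.
nra.
Qed.

Lemma ex_selfpow_index (n : nat) : expR 1 <= n%:R :> R ->
  exists2 k, (0 < k <= n)%N &
    expR 1 * k%:R ^+ k <= n%:R :> R /\ n%:R < expR 1 * k.+1%:R ^+ k.+1 :> R.
Proof.
move=> e_le_n.
pose P k := expR 1 * k%:R ^+ k <= n%:R :> R.
have P1 : P 1%N by rewrite /P expr1 mulr1.
have e_ge1 : 1 <= expR 1 :> R by have := @expR_ge1Dx R 1; lra.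
have ubP k : P k -> (k <= n)%N.
  case: k => // k ek_le_n; rewrite -(ler_nat R); apply: le_trans ek_le_n.
  rewrite (le_trans (ler_eXnr (ltn0Sn k) (ler1n R k.+1))) // ler_peMl //.
  by rewrite exprn_ge0.
have [k Pk k_max] := ex_maxnP (ex_intro P 1%N P1) ubP.
exists k; first by rewrite k_max // ubP.
by split=> //; rewrite ltNge; apply/negP => /k_max; rewrite ltnn.
Qed.

Lemma ln_lt_1DmulKln (x : R) (K : nat) : (0 < K)%N -> 0 < x ->
  x < expR 1 * K%:R ^+ K -> ln x < 1 + K%:R * ln K%:R.
Proof.
move=> K_gt0 x_gt0 x_lt; have KK_gt0 : 0 < K%:R ^+ K :> R by rewrite exprn_gt0 ?ltr0n.
move: x_lt; rewrite -ltr_ln ?posrE ?mulr_gt0 ?expR_gt0 //.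
by rewrite lnM ?posrE ?expR_gt0 // expRK lnXn ?ltr0n // mulr_natl.
Qed.

End Logarithms.

Theorem mainTheorem5 (R : realType) :
  exists kappa : R, 0 < kappa /\
  exists n0 : nat, forall n : nat, (n0 <= n)%N ->
    kappa * n%:R * ln (n%:R) / ln (ln (n%:R)) <= OPT R n.
Proof.
exists 4^-1; split; first by rewrite invr_gt0.
exists (Num.truncn (expR (expR 1) : R)).+1; move=> n n_large.
have ee_lt_n : expR (expR 1) < n%:R :> R.
  by apply: lt_le_trans (truncnS_gt _) _; rewrite ler_nat.
have e_gt0 := @expR_gt0 R 1.
have e_lt_ee : expR 1 < expR (expR 1) :> R by have := @expR_ge1Dx R (expR 1); lra.
have n_gt0 : 0 < n%:R :> R by apply: lt_trans ee_lt_n; rewrite expR_gt0.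
have ln_n : expR 1 < ln n%:R :> R by rewrite -(expRK (expR 1)) ltr_ln ?posrE ?expR_gt0.
have lnln_n : 1 <= ln (ln n%:R) :> R.
  by rewrite -[leLHS](expRK 1) ler_ln ?posrE ?(ltW ln_n) // (lt_trans e_gt0).
have [k /andP[k_gt0 le_kn] [ek_le_n n_lt]] := ex_selfpow_index (ltW (lt_trans e_lt_ee ee_lt_n)).
have q_ge : n%:R^-1 <= expect (subsetw (n%:R^-1 : R)) (fun A : {set 'I_n} => (#|A| == k)%:R).
  by rewrite expect_card_eq card_ord binomial_term_ge // k_gt0.
have opt := OPT_ge_half (leq_trans k_gt0 le_kn) q_ge.
have K_ge2 : 2 <= k.+1%:R :> R by rewrite (ler_nat R 2).
have ratio : ln n%:R / ln (ln n%:R) <= 2 * k.+1%:R :=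
  div_ln_le_of_le K_ge2 lnln_n (ltW (ln_lt_1DmulKln (ltn0Sn k) n_gt0 n_lt)).
have := ler_wpM2l (ltW (divr_gt0 n_gt0 (ltr0Sn R 3))) ratio.
lra.
Qed.
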